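(* Let $\boldsymbol{\mu}=(\mu_1,\dots,\mu_K)^T$, $\boldsymbol{\nu}=(\nu_1,\dots,\nu_K)^T$, $\boldsymbol{\kappa}=(\kappa_1,\dots,\kappa_K)^T\in\mathbb{R}^K$, let $\Delta^K=\{\boldsymbol{\lambda}\in\mathbb{R}^K:\sum_i\lambda_i=1,\ \lambda_i\ge0\}$, and let $$V=\max_{\boldsymbol{\lambda}\in\Delta^K}\left(\boldsymbol{\lambda}^T\boldsymbol{\kappa}-\boldsymbol{\lambda}^T\boldsymbol{\mu}\boldsymbol{\nu}^T\boldsymbol{\lambda}\right).$$ For $1\le i\le j\le K$ define $$q_{ij}(x)=\begin{cases}\dfrac{1}{\nu_j-\nu_i}\Big((x-\nu_i)(x-\nu_j)(\mu_i-\mu_j)+(x-\nu_i)(\kappa_j-\kappa_i-\mu_j\nu_j+\mu_i\nu_i)\Big)+\kappa_i-\mu_i\nu_i, & \mu_i\ne\mu_j\text{ and }\nu_i\ne\nu_j,\\ \kappa_i-\mu_i\nu_i, & \text{otherwise},\end{cases}$$ $$\tilde{\mu}_{ij}=\begin{cases}\left(\left(\dfrac{\kappa_j-\mu_j\nu_j-\kappa_i+\mu_i\nu_i}{2(\mu_j-\mu_i)}+\dfrac{\nu_i+\nu_j}{2}\right)\vee\underline{\nu}_{ij}\right)\wedge\overline{\nu}_{ij}, & \mu_i\ne\mu_j\text{ and }\nu_i\ne\nu_j,\\ \nu_i, & \text{otherwise},\end{cases}$$ with $\underline{\nu}_{ij}=\min\{\nu_i,\nu_j\}$, $\overline{\nu}_{ij}=\max\{\nu_i,\nu_j\}$.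 Then $$V=\max\Big\{\max_{1\le i\le K}\{\kappa_i-\mu_i\nu_i\},\ \max_{1\le i\le j\le K}q_{ij}(\tilde{\mu}_{ij})\Big\}.$$ Moreover, if there exists $i_0$ with $V=\kappa_{i_0}-\mu_{i_0}\nu_{i_0}$, then an optimal $\boldsymbol{\lambda}^*$ is given by $\lambda^*_{i_0}=1$ and $\lambda^*_j=0$ for $j\ne i_0$. Otherwise there exist $1\le i_0<j_0\le K$ with $V=q_{i_0j_0}(\tilde{\mu}_{i_0j_0})$, and an optimal $\boldsymbol{\lambda}^*$ is given by $$\lambda^*_{i_0}=\frac12-\frac{\kappa_{j_0}-\mu_{j_0}\nu_{j_0}-\kappa_{i_0}+\mu_{i_0}\nu_{i_0}}{2(\mu_{j_0}-\mu_{i_0})(\nu_{j_0}-\nu_{i_0})},\quad \lambda^*_{j_0}=1-\lambda^*_{i_0},\quad \lambda^*_j=0\ (j\ne i_0,j_0).$$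
   Context: $\vee$ and $\wedge$ denote max and min of real numbers. *)

From HB Require Import structures.
From mathcomp Require Import all_boot all_order all_algebra.
From mathcomp Require Import reals.
Set Implicit Arguments. Unset Strict Implicit. Unset Printing Implicit Defensive.
Import Order.TTheory GRing.Theory Num.Theory.
Local Open Scope ring_scope.

Section Defs.
Variables (R : realType) (K : nat).
Implicit Types (mu nu kappa lam : 'I_K -> R).

Definition in_simplex lam : Prop :=
  (\sum_(i < K) lam i = 1) /\ (forall i, 0 <= lam i).

Definition dotv (a b : 'I_K -> R) : R := \sum_(i < K) a i * b i.

Definition objective kappa mu nu lam : R :=
  dotv lam kappa - dotv lam mu * dotv nu lam.

Definition is_max_on_simplex (f : ('I_K -> R) -> R) (V : R) : Prop :=
  (exists lam, in_simplex lam /\ f lam = V) /\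
  (forall lam, in_simplex lam -> f lam <= V).

Definition optimal_point (f : ('I_K -> R) -> R) (V : R) lam : Prop :=
  in_simplex lam /\ f lam = V.

Definition vertex_val kappa mu nu (i : 'I_K) : R := kappa i - mu i * nu i.

Definition q_fun kappa mu nu (i j : 'I_K) (x : R) : R :=
  if (mu i != mu j) && (nu i != nu j) then
    (nu j - nu i)^-1 *
      ((x - nu i) * (x - nu j) * (mu i - mu j)
       + (x - nu i) * (kappa j - kappa i - mu j * nu j + mu i * nu i))
    + kappa i - mu i * nu i
  else kappa i - mu i * nu i.

Definition mu_tilde kappa mu nu (i j : 'I_K) : R :=
  if (mu i != mu j) && (nu i != nu j) then
    Num.min
      (Num.max
        ((kappa j - mu j * nu j - kappa i + mu i * nu i) / (2 * (mu j - mu i))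
          + (nu i + nu j) / 2)
        (Num.min (nu i) (nu j)))
      (Num.max (nu i) (nu j))
  else nu i.

(* W = max { max_i a_i , max_{i <= j} b_ij }, written out as the greatest
   element of this finite family *)
Definition is_max_candidates (a : 'I_K -> R) (b : 'I_K -> 'I_K -> R) (W : R)
  : Prop :=
  [/\ (forall i, a i <= W),
      (forall i j : 'I_K, (i <= j)%N -> b i j <= W) &
      ((exists i, W = a i) \/ (exists i j : 'I_K, (i <= j)%N /\ W = b i j))].

Definition unit_vec (i0 : 'I_K) : 'I_K -> R :=
  fun j => if j == i0 then 1 else 0.

Definition lam_star_i0 kappa mu nu (i0 j0 : 'I_K) : R :=
  2^-1 - (kappa j0 - mu j0 * nu j0 - kappa i0 + mu i0 * nu i0)
         / (2 * (mu j0 - mu i0) * (nu j0 - nu i0)).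

Definition edge_vec kappa mu nu (i0 j0 : 'I_K) : 'I_K -> R :=
  fun j => if j == i0 then lam_star_i0 kappa mu nu i0 j0
           else if j == j0 then 1 - lam_star_i0 kappa mu nu i0 j0
           else 0.
End Defs.

From mathcomp Require Import all_boot all_order all_algebra.
From mathcomp Require Import reals.
From mathcomp Require Import ring lra.
Import Order.TTheory GRing.Theory Num.Theory.
Local Open Scope ring_scope.
Set Implicit Arguments. Unset Strict Implicit. Unset Printing Implicit Defensive.

(* Along a direction d with \sum d = 0 and d . mu = 0 supported in the support of
   lam, the factor lam . mu of the objective is constant, so the objective is affine
   in the step; moving in its non-decreasing sense until a coordinate vanishes
   shrinks the support without decreasing the objective. Three support points always
   admit such a d, so the maximum is attained at some t e_i + (1 - t) e_j, where the
   objective is  t v_i + (1 - t) v_j + (mu_i - mu_j) (nu_i - nu_j) t (1 - t).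
   If the curvature coefficient is nonpositive this is below max (v_i, v_j);
   otherwise it is a concave parabola, whose maximum over [0, 1] is read off, in the
   coordinate x = t nu_i + (1 - t) nu_j, at the projection mu_tilde of its vertex
   onto the segment between nu_i and nu_j. *)

Section Interval.
Variable R : realFieldType.
Implicit Types lo hi a b t x z : R.

Definition clamp lo hi z := Num.min (Num.max z lo) hi.

Lemma clamp_in lo hi z : lo <= hi -> lo <= clamp lo hi z <= hi.
Proof.
rewrite /clamp maxEle minEle => lohi.
have [zlo|lo_z] := leP z lo; first by rewrite lohi lexx.
by case: (leP z hi) => /=; lra.
Qed.

Lemma sqr_clamp_sub_le lo hi x z : lo <= x <= hi ->
  (clamp lo hi z - z) ^+ 2 <= (x - z) ^+ 2.
Proof.
move=> /andP[lox xhi]; have lohi := le_trans lox xhi.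
rewrite /clamp maxEle minEle.
have [zlo|lo_z] := leP z lo.
  by rewrite lohi ler_sqr ?nnegrE ?lerD2r ?subr_ge0 // (le_trans zlo).
have [zhi|hi_z] /= := leP z hi; first by rewrite subrr expr0n sqr_ge0.
rewrite -sqrrN -[(x - z) ^+ 2]sqrrN !opprB.
by rewrite ler_sqr ?nnegrE ?lerD2l ?lerN2 ?subr_ge0 // ltW // (le_lt_trans xhi).
Qed.

Lemma min_le_max a b : Num.min a b <= Num.max a b.
Proof. by rewrite minEle maxEle; case: (leP a b) => //; lra. Qed.

Lemma convex_comb_in_min_max a b t : 0 <= t <= 1 ->
  Num.min a b <= b + t * (a - b) <= Num.max a b.
Proof. by rewrite minEle maxEle => /andP[t0 t1]; case: (leP a b) => ab; nra. Qed.

Lemma convex_coord_in01 a b x : a != b -> Num.min a b <= x <= Num.max a b ->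
  0 <= (x - b) / (a - b) <= 1.
Proof.
move=> ab; rewrite minEle maxEle.
have [a_le_b|b_lt_a] := leP a b => /andP[lo hi].
  have ltab : a < b by rewrite lt_neqAle ab.
  rewrite -mulrNN -invrN !opprB.
  by rewrite divr_ge0 ?ler_pdivrMr ?mul1r ?subr_gt0 /=; lra.
by rewrite divr_ge0 ?ler_pdivrMr ?mul1r ?subr_gt0 /=; lra.
Qed.

Lemma convex_comb_eq_max (V x y t : R) : 0 <= t <= 1 -> x <= V -> y <= V ->
  V <= t * x + (1 - t) * y -> V = x \/ V = y.
Proof.
move=> /andP[t0 t1] xV yV Vle.
have [->|Vx] := eqVneq V x; first by left.
have [->|Vy] := eqVneq V y; first by right.
have {Vx}xV : x < V by rewrite lt_neqAle eq_sym Vx.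
have {Vy}yV : y < V by rewrite lt_neqAle eq_sym Vy.
have ty : 0 <= (1 - t) * (V - y) by rewrite mulr_ge0 ?subr_ge0 // ltW.
have [t_eq0|t_gt0] := eqVneq t 0; first by move: Vle; rewrite t_eq0; lra.
have tx : 0 < t * (V - x) by rewrite mulr_gt0 ?subr_gt0 // lt_neqAle eq_sym t_gt0.
by exfalso; lra.
Qed.
End Interval.

Section Segment.
Variables (R : realFieldType) (ki kj mi mj ni nj : R).

Definition seg_obj (t : R) : R :=
  t * ki + (1 - t) * kj - (t * mi + (1 - t) * mj) * (t * ni + (1 - t) * nj).

Definition seg_argmax : R :=
  2^-1 - (kj - mj * nj - ki + mi * ni) / (2 * (mj - mi) * (nj - ni)).

Definition seg_xmax : R :=
  (kj - mj * nj - ki + mi * ni) / (2 * (mj - mi)) + (ni + nj) / 2.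

(* The paper's q_ij: seg_obj in the coordinate x = t ni + (1 - t) nj (seg_qE). *)
Definition seg_q (x : R) : R :=
  (nj - ni)^-1 * ((x - ni) * (x - nj) * (mi - mj)
                  + (x - ni) * (kj - ki - mj * nj + mi * ni)) + ki - mi * ni.

Lemma seg_objE t : seg_obj t =
  t * (ki - mi * ni) + (1 - t) * (kj - mj * nj) + (mi - mj) * (ni - nj) * (t * (1 - t)).
Proof. rewrite /seg_obj; ring. Qed.

Lemma seg_obj0 : seg_obj 0 = kj - mj * nj.
Proof. by rewrite /seg_obj; ring. Qed.

Lemma seg_obj1 : seg_obj 1 = ki - mi * ni.
Proof. by rewrite /seg_obj; ring. Qed.

Lemma seg_obj_le_chord t : (mi - mj) * (ni - nj) <= 0 -> 0 <= t <= 1 ->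
  seg_obj t <= t * (ki - mi * ni) + (1 - t) * (kj - mj * nj).
Proof.
move=> c_le0 /andP[t0 t1]; rewrite seg_objE gerDl.
by rewrite mulr_le0_ge0 // mulr_ge0 ?subr_ge0.
Qed.

Section Nondegenerate.
Hypotheses (mij : mi != mj) (nij : ni != nj).

Let mji : mj - mi != 0. Proof. by rewrite subr_eq0 eq_sym. Qed.
Let nji : nj - ni != 0. Proof. by rewrite subr_eq0 eq_sym. Qed.
Let nij' : ni - nj != 0. Proof. by rewrite subr_eq0. Qed.

Lemma seg_obj_sqr t :
  seg_obj t = seg_obj seg_argmax - (mi - mj) * (ni - nj) * (t - seg_argmax) ^+ 2.
Proof. by rewrite /seg_obj /seg_argmax; field; rewrite mji nji. Qed.

Lemma seg_qE x : seg_q x = seg_obj ((x - nj) / (ni - nj)).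
Proof. by rewrite /seg_q /seg_obj; field; rewrite nji nij'. Qed.

Lemma seg_q_sqr x :
  seg_q x = seg_obj seg_argmax - (mi - mj) / (ni - nj) * (x - seg_xmax) ^+ 2.
Proof.
by rewrite seg_qE seg_obj_sqr /seg_argmax /seg_xmax; field; rewrite mji nji nij'.
Qed.

Lemma seg_obj_le_closer s t : 0 <= (mi - mj) * (ni - nj) ->
  (s - seg_argmax) ^+ 2 <= (t - seg_argmax) ^+ 2 -> seg_obj t <= seg_obj s.
Proof.
move=> c_ge0 st; rewrite [seg_obj t]seg_obj_sqr [seg_obj s]seg_obj_sqr.
by rewrite lerD2l lerN2 ler_wpM2l.
Qed.

Lemma seg_obj_le_argmax t : 0 <= (mi - mj) * (ni - nj) ->
  seg_obj t <= seg_obj seg_argmax.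
Proof. by move=> c_ge0; rewrite seg_obj_le_closer // subrr expr0n sqr_ge0. Qed.

End Nondegenerate.

Lemma seg_curv_neq0 : 0 < (mi - mj) * (ni - nj) -> mi != mj /\ ni != nj.
Proof. by move=> /lt0r_neq0; rewrite mulf_eq0 negb_or !subr_eq0 => /andP. Qed.

Lemma seg_argmax_in01 t : 0 < (mi - mj) * (ni - nj) -> 0 <= t <= 1 ->
  seg_obj 0 < seg_obj t -> seg_obj 1 < seg_obj t -> 0 <= seg_argmax <= 1.
Proof.
move=> c_gt0 /andP[t0 t1] lt0 lt1; have [mij nij] := seg_curv_neq0 c_gt0.
have closer := seg_obj_le_closer mij nij (ltW c_gt0).
apply/andP; split; rewrite leNgt; apply/negP => out.
  suff : seg_obj t <= seg_obj 0 by rewrite leNgt lt0.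
  by apply: closer; rewrite ler_sqr ?nnegrE /=; lra.
suff : seg_obj t <= seg_obj 1 by rewrite leNgt lt1.
by apply: closer; rewrite -sqrrN -[(t - _) ^+ 2]sqrrN ler_sqr ?nnegrE /=; lra.
Qed.

Definition seg_qmax : R := seg_q (clamp (Num.min ni nj) (Num.max ni nj) seg_xmax).

Lemma seg_obj_le_qmax t : 0 < (mi - mj) * (ni - nj) -> 0 <= t <= 1 ->
  seg_obj t <= seg_qmax.
Proof.
move=> c_gt0 t01; have [mij nij] := seg_curv_neq0 c_gt0.
have nij' : ni - nj != 0 by rewrite subr_eq0.
have -> : seg_obj t = seg_q (nj + t * (ni - nj)).
  by rewrite seg_qE //; congr seg_obj; field.
rewrite /seg_qmax !seg_q_sqr // lerD2l lerN2 ler_wpM2l //.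
  have -> : (mi - mj) / (ni - nj) = (mi - mj) * (ni - nj) / (ni - nj) ^+ 2 by field.
  by rewrite divr_ge0 ?sqr_ge0 ?ltW.
by apply: sqr_clamp_sub_le; apply: convex_comb_in_min_max.
Qed.

Lemma seg_qmax_on_segment : ni != nj -> exists2 t, 0 <= t <= 1 & seg_qmax = seg_obj t.
Proof.
move=> nij; exists ((clamp (Num.min ni nj) (Num.max ni nj) seg_xmax - nj) / (ni - nj)).
  exact/convex_coord_in01/clamp_in/min_le_max.
exact: seg_qE.
Qed.

End Segment.

Section FiniteSums.
Variables (V : nmodType) (I : finType) (F : I -> V).

Lemma sumr_supp1 i : (forall k, k != i -> F k = 0) -> \sum_k F k = F i.
Proof. by move=> F0; rewrite (bigD1 i) //= big1 ?addr0. Qed.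

Lemma sumr_supp2 i j : i != j -> (forall k, k != i -> k != j -> F k = 0) ->
  \sum_k F k = F i + F j.
Proof.
move=> ij F0; rewrite (bigD1 i) //= (bigD1 j) 1?eq_sym //= addrA big1 ?addr0 //.
by move=> k /andP[]; apply: F0.
Qed.

Lemma sumr_supp3 a b c : b != a -> c != a -> c != b ->
  (forall k, k != a -> k != b -> k != c -> F k = 0) ->
  \sum_k F k = F a + F b + F c.
Proof.
move=> ba ca cb F0; rewrite (bigD1 a) //= (bigD1 b) //= (bigD1 c) /= ?ca ?cb //.
by rewrite !addrA big1 ?addr0 // => k /andP[/andP[]]; apply: F0.
Qed.

End FiniteSums.

Lemma card_le2_cover (T : finType) (A : {set T}) x : x \in A -> (#|A| <= 2)%N ->
  exists j, forall k, k != x -> k != j -> k \notin A.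
Proof.
move=> xA A_le2; case: (pickP [pred k in A | k != x]) => [j /andP[jA jx]|none].
  exists j => k kx kj; apply/negP => kA; move: A_le2; rewrite leqNgt => /negP; apply.
  by apply/card_gt2P; exists x, j, k; split; split; rewrite // eq_sym.
by exists x => k kx _; apply/negP => kA; have := none k; rewrite /= kA kx.
Qed.

Section Simplex.
Variables (R : realType) (K : nat) (mu nu kappa : 'I_K -> R).
Implicit Types (lam d : 'I_K -> R) (i j : 'I_K).

Local Notation f := (objective kappa mu nu).
Local Notation F i j := (seg_obj (kappa i) (kappa j) (mu i) (mu j) (nu i) (nu j)).

Definition supp lam : {set 'I_K} := [set k | lam k != 0].

Definition pair_vec i j (t : R) : 'I_K -> R :=
  fun k => if k == i then t else if k == j then 1 - t else 0.

Lemma dotv_shiftl lam d a s :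
  dotv (fun k => lam k + s * d k) a = dotv lam a + s * dotv d a.
Proof. by rewrite /dotv mulr_sumr -big_split; apply: eq_bigr => k _ /=; ring. Qed.

Lemma dotv_shiftr lam d a s :
  dotv a (fun k => lam k + s * d k) = dotv a lam + s * dotv a d.
Proof. by rewrite /dotv mulr_sumr -big_split; apply: eq_bigr => k _ /=; ring. Qed.

Lemma dotvNl d a : dotv (fun k => - d k) a = - dotv d a.
Proof. by rewrite /dotv -sumrN; apply: eq_bigr => k _; rewrite mulNr. Qed.

Lemma dotvNr d a : dotv a (fun k => - d k) = - dotv a d.
Proof. by rewrite /dotv -sumrN; apply: eq_bigr => k _; rewrite mulrN. Qed.

Lemma objective_shift lam d s : dotv d mu = 0 ->
  f (fun k => lam k + s * d k) = f lam + s * (dotv d kappa - dotv lam mu * dotv nu d).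
Proof. by move=> dmu0; rewrite /objective !(dotv_shiftl, dotv_shiftr) dmu0; ring. Qed.

Lemma objective_single lam i : in_simplex lam -> (forall k, k != i -> lam k = 0) ->
  f lam = vertex_val kappa mu nu i.
Proof.
move=> [sum1 _] lam0; have lam_i : lam i = 1 by rewrite -sum1 (sumr_supp1 lam0).
have dotl a : dotv lam a = a i.
  by rewrite /dotv (sumr_supp1 (i := i)) ?lam_i ?mul1r // => k /lam0->; rewrite mul0r.
have dotr a : dotv a lam = a i.
  by rewrite /dotv (sumr_supp1 (i := i)) ?lam_i ?mulr1 // => k /lam0->; rewrite mulr0.
by rewrite /objective !dotl dotr.
Qed.

Lemma objective_pair lam i j : i != j -> (forall k, k != i -> k != j -> lam k = 0) ->
  lam j = 1 - lam i -> f lam = F i j (lam i).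
Proof.
move=> ij lam0 lam_j.
have dotl a : dotv lam a = lam i * a i + lam j * a j.
  by rewrite /dotv (sumr_supp2 ij) // => k ki kj; rewrite lam0 ?mul0r.
have dotr a : dotv a lam = a i * lam i + a j * lam j.
  by rewrite /dotv (sumr_supp2 ij) // => k ki kj; rewrite lam0 ?mulr0.
by rewrite /objective !dotl dotr lam_j /seg_obj; ring.
Qed.

Lemma unit_vec_simplex i : in_simplex (unit_vec R i).
Proof.
split=> [|k]; last by rewrite /unit_vec; case: eqP.
by rewrite (sumr_supp1 (i := i)) /unit_vec ?eqxx // => k /negPf->.
Qed.

Lemma objective_unit_vec i : f (unit_vec R i) = vertex_val kappa mu nu i.
Proof.
by apply: objective_single (unit_vec_simplex i) _ => k /negPf ki; rewrite /unit_vec ki.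
Qed.

Lemma pair_vecE i j t : i != j ->
  [/\ pair_vec i j t i = t, pair_vec i j t j = 1 - t &
      forall k, k != i -> k != j -> pair_vec i j t k = 0].
Proof.
move=> ij; have ji : j != i by rewrite eq_sym.
by rewrite /pair_vec eqxx (negPf ji) eqxx; split=> // k /negPf-> /negPf->.
Qed.

Lemma pair_vec_simplex i j t : i != j -> 0 <= t <= 1 -> in_simplex (pair_vec i j t).
Proof.
move=> ij /andP[t0 t1]; have [vi vj v0] := pair_vecE t ij; split=> [|k].
  by rewrite (sumr_supp2 ij v0) vi vj addrC subrK.
by rewrite /pair_vec; case: eqP => // _; case: eqP => // _; rewrite subr_ge0.
Qed.

Lemma objective_pair_vec i j t : i != j -> f (pair_vec i j t) = F i j t.
Proof.
by move=> ij; have [vi vj v0] := pair_vecE t ij; rewrite (objective_pair ij v0) vi.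
Qed.

Lemma edge_vecE i j : edge_vec kappa mu nu i j =
  pair_vec i j (seg_argmax (kappa i) (kappa j) (mu i) (mu j) (nu i) (nu j)).
Proof. by []. Qed.

Definition level_direction lam d : Prop :=
  [/\ \sum_k d k = 0, dotv d mu = 0, (forall k, d k != 0 -> lam k != 0) &
      exists k, d k != 0].

Lemma ascent_shrinks_support lam d : in_simplex lam -> level_direction lam d ->
  0 <= dotv d kappa - dotv lam mu * dotv nu d ->
  exists lam1, [/\ in_simplex lam1, f lam <= f lam1 & (#|supp lam1| < #|supp lam|)%N].
Proof.
move=> [sum1 lam_ge0] [dsum0 dmu0 dsupp [k1 dk1]] slope_ge0.
have [k0 dk0] : exists k, d k < 0.
  apply/existsP; apply: contraNT dk1 => /existsPn d_ge0.
  by apply/eqP/(psumr_eq0P _ dsum0) => // k _; rewrite leNgt d_ge0.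
(* The largest step s keeping lam + s d nonnegative; it kills coordinate k. *)
have [k dk_lt0 kmin] := arg_minP (P := [pred m | d m < 0]) (fun m => lam m / - d m) dk0.
rewrite /= in dk_lt0; have ndk_gt0 : 0 < - d k by rewrite oppr_gt0.
have s_le m : d m < 0 -> lam k / - d k * - d m <= lam m.
  by move=> dm_lt0; have := kmin m dm_lt0; rewrite /= ler_pdivlMr ?oppr_gt0.
have s_ge0 : 0 <= lam k / - d k := divr_ge0 (lam_ge0 k) (ltW ndk_gt0).
have s_k : lam k + lam k / - d k * d k = 0 by field; rewrite ltr0_neq0.
move: (lam k / - d k) s_le s_ge0 s_k => s s_le s_ge0 s_k.
exists (fun m => lam m + s * d m); split.
- split=> [|m]; first by rewrite big_split /= -mulr_sumr dsum0 mulr0 addr0.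
  have [dm_lt0|dm_ge0] := ltP (d m) 0; last by rewrite addr_ge0 ?mulr_ge0.
  by have := s_le m dm_lt0; rewrite mulrN; lra.
- by rewrite objective_shift // lerDl mulr_ge0.
- apply/proper_card/properP; split.
    apply/subsetP => m; rewrite !inE; apply: contraNN => /eqP lam_m0.
    have -> : d m = 0 by case: (eqVneq (d m) 0) => // /dsupp; rewrite lam_m0 eqxx.
    by rewrite lam_m0 mulr0 addr0.
  by exists k; rewrite !inE ?s_k ?eqxx // dsupp // ltr0_neq0.
Qed.

Lemma shrink_support lam d : in_simplex lam -> level_direction lam d ->
  exists lam1, [/\ in_simplex lam1, f lam <= f lam1 & (#|supp lam1| < #|supp lam|)%N].
Proof.
move=> lamS dL; have [slope_ge0|slope_lt0] := leP 0 (dotv d kappa - dotv lam mu * dotv nu d).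
  exact: ascent_shrinks_support slope_ge0.
apply: (ascent_shrinks_support (d := fun k => - d k)) => //; last first.
  by rewrite dotvNl dotvNr; lra.
case: dL => dsum0 dmu0 dsupp [k dk].
split; [by rewrite sumrN dsum0 oppr0 | by rewrite dotvNl dmu0 oppr0 | |].
  by move=> m; rewrite oppr_eq0; apply: dsupp.
by exists k; rewrite oppr_eq0.
Qed.

Definition tri_vec (a b c : 'I_K) (x y z : R) : 'I_K -> R :=
  fun k => if k == a then x else if k == b then y else if k == c then z else 0.

Lemma tri_vec_level_direction lam a b c x y z :
  [/\ a \in supp lam, b \in supp lam & c \in supp lam] -> [/\ a != b, b != c & c != a] ->
  x + y + z = 0 -> x * mu a + y * mu b + z * mu c = 0 -> z != 0 ->
  level_direction lam (tri_vec a b c x y z).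
Proof.
rewrite !inE => -[aS bS cS] [ab bc ca] xyz0 xyz_mu0 z0.
have ba : b != a by rewrite eq_sym.
have cb : c != b by rewrite eq_sym.
have [va vb vc] : [/\ tri_vec a b c x y z a = x, tri_vec a b c x y z b = y &
    tri_vec a b c x y z c = z].
  by rewrite /tri_vec eqxx (negPf ba) eqxx (negPf ca) (negPf cb) eqxx.
have v0 k : k != a -> k != b -> k != c -> tri_vec a b c x y z k = 0.
  by rewrite /tri_vec => /negPf-> /negPf-> /negPf->.
split; last by exists c; rewrite vc.
- by rewrite (sumr_supp3 ba ca cb v0) va vb vc.
- rewrite /dotv (sumr_supp3 ba ca cb) ?va ?vb ?vc //.
  by move=> k ka kb kc; rewrite v0 ?mul0r.
- move=> k; rewrite /tri_vec; case: (eqVneq k a) => [->//|_].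
  by case: (eqVneq k b) => [->//|_]; case: (eqVneq k c) => [->//|_]; rewrite eqxx.
Qed.

Lemma exists_level_direction lam : (2 < #|supp lam|)%N -> exists d, level_direction lam d.
Proof.
move=> /card_gt2P[a [b [c [inS neq]]]].
have [mu_ab|mu_ab] := eqVneq (mu a) (mu b).
  have [ab bc ca] := neq; exists (tri_vec b c a (-1) 0 1).
  apply: tri_vec_level_direction; rewrite ?oner_eq0 //.
  - by case: inS.
  - by rewrite addr0 addNr.
  - by rewrite mu_ab; ring.
(* The cross product of (1, 1, 1) and (mu a, mu b, mu c). *)
exists (tri_vec a b c (mu b - mu c) (mu c - mu a) (mu a - mu b)).
apply: tri_vec_level_direction => //; try ring.
by rewrite subr_eq0.
Qed.

Lemma simplex_supp_neq0 lam : in_simplex lam -> exists i, i \in supp lam.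
Proof.
move=> [sum1 _]; apply/set0Pn/eqP => supp0; move: sum1.
rewrite big1 => [/eqP|k _]; first by rewrite eq_sym oner_eq0.
by apply/eqP; move: (in_set0 k); rewrite -supp0 inE => /negbFE.
Qed.

Lemma exists_pair_improvement lam : in_simplex lam ->
  exists lam' i j, [/\ in_simplex lam', f lam <= f lam', (i <= j)%N &
                      forall k, k != i -> k != j -> lam' k = 0].
Proof.
have [n] := ubnP #|supp lam|; elim: n lam => // n IH lam lt_n lamS.
have [le2|gt2] := leqP #|supp lam| 2; last first.
  have [d dL] := exists_level_direction gt2.
  have [lam1 [lam1S le1 lt1]] := shrink_support lamS dL.
  have [lam' [i [j [lam'S le' ij lam'0]]]] := IH lam1 (leq_trans lt1 lt_n) lam1S.
  by exists lam', i, j; split=> //; apply: le_trans le'.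
have [i iS] := simplex_supp_neq0 lamS.
have [j ijS] := card_le2_cover iS le2.
have lam0 k : k != i -> k != j -> lam k = 0.
  by move=> ki kj; apply/eqP; have := ijS k ki kj; rewrite inE negbK.
have [ij|ji] := leqP i j; first by exists lam, i, j.
by exists lam, j, i; split=> // [|k kj ki]; [apply: ltnW | apply: lam0].
Qed.
End Simplex.

Section Optimum.
Variables (R : realType) (K : nat) (mu nu kappa : 'I_K -> R) (V : R).
Hypothesis V_max : is_max_on_simplex (objective kappa mu nu) V.

Local Notation f := (objective kappa mu nu).
Local Notation v := (vertex_val kappa mu nu).
Local Notation F i j := (seg_obj (kappa i) (kappa j) (mu i) (mu j) (nu i) (nu j)).
Local Notation curv i j := ((mu i - mu j) * (nu i - nu j)).
Local Notation Q i j := (q_fun kappa mu nu i j (mu_tilde kappa mu nu i j)).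

Lemma vertex_val_le_max i : v i <= V.
Proof. by rewrite -objective_unit_vec; apply: V_max.2; apply: unit_vec_simplex. Qed.

Lemma seg_obj_le_max i j t : i != j -> 0 <= t <= 1 -> F i j t <= V.
Proof.
by move=> ij t01; rewrite -(objective_pair_vec _ _ _ _ ij); apply/V_max.2/pair_vec_simplex.
Qed.

Lemma q_candidateE i j : mu i != mu j -> nu i != nu j ->
  Q i j = seg_qmax (kappa i) (kappa j) (mu i) (mu j) (nu i) (nu j).
Proof. by rewrite /q_fun /mu_tilde => -> ->. Qed.

Lemma q_candidate_degenerate i j : ~~ ((mu i != mu j) && (nu i != nu j)) -> Q i j = v i.
Proof. by rewrite /q_fun => /negPf->. Qed.

Lemma q_candidate_le_max i j : Q i j <= V.
Proof.
case: (boolP ((mu i != mu j) && (nu i != nu j))) => [/andP[mij nij]|degen]; last first.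
  by rewrite q_candidate_degenerate ?vertex_val_le_max.
rewrite q_candidateE //.
have [t t01 ->] := seg_qmax_on_segment (kappa i) (kappa j) (mu i) (mu j) nij.
by apply: seg_obj_le_max t01; apply: contraNneq mij => ->.
Qed.

Lemma q_candidate_eq_max i j t : 0 < curv i j -> 0 <= t <= 1 -> F i j t = V -> V = Q i j.
Proof.
move=> c_gt0 t01 Ft; have [mij nij] := seg_curv_neq0 c_gt0.
apply/eqP; rewrite eq_le q_candidate_le_max q_candidateE // -Ft andbT.
exact: seg_obj_le_qmax c_gt0 t01.
Qed.

Lemma max_at_vertex_or_edge : (exists i, V = v i) \/
  exists (i j : 'I_K) t, [/\ (i < j)%N, 0 < curv i j, 0 <= t <= 1 & F i j t = V].
Proof.
have [[lam [lamS f_lam]] _] := V_max.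
have [lam' [i [j [lam'S le' ij lam'0]]]] := exists_pair_improvement mu nu kappa lamS.
have f_lam' : f lam' = V by apply/eqP; rewrite eq_le V_max.2 //= -f_lam.
have [eij|nij] := eqVneq i j.
  by left; exists i; rewrite -f_lam'; apply: objective_single => // k ki; rewrite lam'0 -?eij.
have [sum1 lam'_ge0] := lam'S.
have lam'_j : lam' j = 1 - lam' i by rewrite -sum1 (sumr_supp2 nij lam'0) addrAC subrr add0r.
have t01 : 0 <= lam' i <= 1 by rewrite lam'_ge0 -subr_ge0 -lam'_j lam'_ge0.
have FV : F i j (lam' i) = V by rewrite -(objective_pair mu nu kappa nij lam'0 lam'_j).
have [c_le0|c_gt0] := leP (curv i j) 0; last first.
  by right; exists i, j, (lam' i); rewrite ltn_neqAle nij ij.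
left; have := seg_obj_le_chord (kappa i) (kappa j) c_le0 t01; rewrite FV.
by case/(convex_comb_eq_max t01 (vertex_val_le_max i) (vertex_val_le_max j)) => ->;
  [exists i | exists j].
Qed.

Lemma edge_vec_optimal (i j : 'I_K) t : ~ (exists i0, V = v i0) -> (i < j)%N ->
  0 < curv i j -> 0 <= t <= 1 -> F i j t = V -> optimal_point f V (edge_vec kappa mu nu i j).
Proof.
move=> no_vertex ij c_gt0 t01 Ft; have nij : i != j by rewrite neq_ltn ij.
have v_lt k : v k < V.
  by rewrite lt_neqAle vertex_val_le_max andbT; apply/eqP => vk; apply: no_vertex; exists k.
have s01 : 0 <= seg_argmax (kappa i) (kappa j) (mu i) (mu j) (nu i) (nu j) <= 1.
  by apply: (seg_argmax_in01 c_gt0 t01); rewrite Ft ?seg_obj0 ?seg_obj1 v_lt.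
rewrite edge_vecE; split; first exact: pair_vec_simplex nij s01.
have [mij nij'] := seg_curv_neq0 c_gt0.
rewrite objective_pair_vec //; apply/eqP; rewrite eq_le seg_obj_le_max //=.
by rewrite -{1}Ft seg_obj_le_argmax ?ltW.
Qed.

End Optimum.

Theorem theorem5p3 (R : realType) (K : nat) (mu nu kappa : 'I_K -> R) (V : R) :
  (0 < K)%N ->
  is_max_on_simplex (objective kappa mu nu) V ->
  [/\ is_max_candidates (vertex_val kappa mu nu)
        (fun i j => q_fun kappa mu nu i j (mu_tilde kappa mu nu i j)) V,
      (forall i0 : 'I_K, V = vertex_val kappa mu nu i0 ->
         optimal_point (objective kappa mu nu) V (unit_vec R i0)) &
      ((~ exists i0 : 'I_K, V = vertex_val kappa mu nu i0) ->
         exists i0 j0 : 'I_K,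
           [/\ (i0 < j0)%N,
               V = q_fun kappa mu nu i0 j0 (mu_tilde kappa mu nu i0 j0) &
               optimal_point (objective kappa mu nu) V
                 (edge_vec kappa mu nu i0 j0)])].
Proof.
(* 0 < K already follows from the simplex being nonempty. *)
move=> _ V_max; have max_cases := max_at_vertex_or_edge V_max.
split.
- split=> [i|i j _|]; first exact: vertex_val_le_max.
    exact: q_candidate_le_max.
  case: max_cases => [[i ->]|[i [j [t [ij c_gt0 t01 Ft]]]]]; first by left; exists i.
  by right; exists i, j; split; [apply: ltnW | apply: q_candidate_eq_max c_gt0 t01 Ft].
- by move=> i ->; split; [apply: unit_vec_simplex | apply: objective_unit_vec].
- move=> no_vertex; case: max_cases => [//|[i [j [t [ij c_gt0 t01 Ft]]]]].
  exists i, j; split=> //; first exact: q_candidate_eq_max c_gt0 t01 Ft.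
  exact: edge_vec_optimal no_vertex ij c_gt0 t01 Ft.
Qed.
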